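(* Let $G(X)=\sum_{n\ge 1}c_nX^n\in\mathbb{F}_2[[X]]$ be the compositional inverse of $F(X)=\sum_{n\ge1}t_nX^n\in\mathbb{F}_2[[X]]$, and set $c_0=0$. Then $G$ satisfies each of the polynomial equations $$X^2G(X)^3+X(1+X)G(X)^2+(X^2+1)G(X)+X(X+1)=0,$$ $$X^3G(X)^4+(1+X)G(X)+X(X^2+1)=0$$ over $\mathbb{F}_2[[X]]$. In particular, $c_0=0$, $c_1=c_2=1$, $c_3=0$, and for every $n\ge 1$: $$c_{4n}=c_{4n-1},\quad c_{4n+1}=c_{4n-1},\quad c_{4n+2}=c_{4n-1},\quad c_{4n+3}\equiv c_{4n-1}+c_n \pmod 2.$$
   Context: For $n\in\mathbb{N}=\{0,1,2,\dots\}$ let $s_2(n)$ denote the sum of the binary digits of $n$, and let $t_n=s_2(n)\bmod 2\in\{0,1\}$ (the Prouhet–Thue–Morse sequence). Since $t_0=0$ and $t_1=1$, the series $F(X)=\sum_{n\ge1}t_nX^n\in\mathbb{F}_2[[X]]$ has a unique compositional inverse $G\in\mathbb{F}_2[[X]]$, i.e. $F(G(X))=G(F(X))=X$. The coefficients $c_n$ are identified with integers in $\{0,1\}$. *)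

From mathcomp Require Import all_boot all_algebra.
Set Implicit Arguments. Unset Strict Implicit. Unset Printing Implicit Defensive.
Import GRing.Theory.
Local Open Scope ring_scope.

Definition F2 := 'F_2.
Definition series := nat -> F2.

Definition szero : series := fun _ => 0.
Definition sone : series := fun n => (n == 0%N)%:R.
Definition sX : series := fun n => (n == 1%N)%:R.
Definition sadd (a b : series) : series := fun n => a n + b n.
Definition smul (a b : series) : series :=
  fun n => \sum_(i < n.+1) a i * b (n - i)%N.
Fixpoint spow (a : series) (k : nat) : series :=
  match k with 0%N => sone | k'.+1 => smul a (spow a k') end.
(* composition f(g); this is the genuine composition when g 0 = 0
   (then g^k has no coefficient below degree k, so the sum is exact) *)
Definition scomp (f g : series) : series :=
  fun n => \sum_(k < n.+1) f k * spow g k n.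
Definition sp (p : {poly F2}) : series := fun n => p`_n.

(* s_2(n): sum of binary digits of n (digit i is (n / 2^i) mod 2; digits
   with i > n vanish) *)
Definition s2 (n : nat) : nat := \sum_(i < n.+1) ((n %/ 2 ^ i) %% 2).
Definition tm (n : nat) : F2 := (s2 n %% 2)%:R.
Definition Fser : series := fun n => if n == 0%N then 0 else tm n.

(* Over F_2 the Thue-Morse series satisfies F = (1 + X) F(X^2) + X / (1 + X^2),
   and squaring is the Frobenius p^2 = p(X^2), so
   (1 + X)^3 F^2 + (1 + X)^2 F + X = 0.  Substituting G into this relation and
   using F(G) = X gives the cubic equation for G; multiplying it by XG + X + 1
   gives the quartic one, which by G^4 = G(X^4) reads
   (1 + X) G = X^3 G(X^4) + X + X^3, and its coefficients are the recurrences.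
   All series identities are proved on truncations: an identity between series
   holds iff it holds modulo X^N for every N, and modulo X^N the series
   operations are those of the polynomial ring. *)

From mathcomp Require Import all_boot all_algebra zify ring.
From Stdlib Require Import FunctionalExtensionality.

Set Implicit Arguments.
Unset Strict Implicit.
Unset Printing Implicit Defensive.
Import GRing.Theory.
Local Open Scope ring_scope.

Lemma sum_ord_vanish (R : nmodType) (F : nat -> R) a m :
  (forall k, (a <= k)%N -> F k = 0) -> (a <= m)%N ->
  \sum_(k < m) F k = \sum_(k < a) F k.
Proof.
move=> F0 le_am; rewrite -(subnKC le_am) big_split_ord /= [X in _ + X]big1 ?addr0 //.
by move=> k _; rewrite F0 // leq_addr.
Qed.

Section PolyDvdXn.
Variable R : idomainType.
Implicit Types p q : {poly R}.

Lemma dvdXn_take_poly N p : ('X^N %| p) = (take_poly N p == 0).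
Proof. by rewrite Pdiv.IdomainMonic.take_poly_modp; apply/modp_eq0P/eqP. Qed.

Lemma dvdXnP N p : reflect (forall i, (i < N)%N -> p`_i = 0) ('X^N %| p).
Proof.
rewrite dvdXn_take_poly; apply: (iffP eqP) => [Hp i lt_iN | Hp].
  by have := coef_take_poly N p i; rewrite lt_iN Hp coef0.
by apply/polyP => i; rewrite coef_take_poly coef0; case: ifP => // /Hp.
Qed.

Lemma dvdX_coef0 q : q`_0 = 0 -> 'X %| q.
Proof. by move=> q0; rewrite -['X]expr1; apply/dvdXnP => -[|//] _. Qed.

Lemma coef_exp_coef0 q k i : q`_0 = 0 -> (i < k)%N -> (q ^+ k)`_i = 0.
Proof. by move=> /dvdX_coef0 Xq; apply/dvdXnP; rewrite dvdp_exp2r. Qed.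

Lemma dvdXn_comp N p q : 'X^N %| p -> q`_0 = 0 -> 'X^N %| p \Po q.
Proof.
rewrite dvdXn_take_poly -[p in _ -> _ -> _ %| p \Po _](poly_take_drop N) => /eqP-> q0.
by rewrite add0r rmorphM rmorphXn /= comp_polyX dvdp_mull // dvdp_exp2r ?dvdX_coef0.
Qed.

End PolyDvdXn.

Section CoefComp.
Variable R : nzSemiRingType.
Implicit Types p : {poly R}.

Lemma coef_1DX_comp_X2 p i : ((1 + 'X) * (p \Po 'X^2))`_i = p`_i./2.
Proof.
rewrite mulrDl mul1r coefD coefXM !coef_comp_poly_Xn // !dvdn2 !divn2.
case: i => [|i] /=; first by rewrite addr0.
by rewrite negbK uphalf_half; case: (odd i); rewrite ?addr0 ?add0r.
Qed.

Lemma coef_X3_comp_X4 p i :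
  ('X^3 * (p \Po 'X^4))`_i = if (i %% 4 == 3)%N then p`_(i %/ 4)%N else 0.
Proof.
rewrite coefXnM coef_comp_poly_Xn //.
case: ltnP => [lt_i3 | le3i]; first by rewrite ifF //; lia.
have -> : (4 %| i - 3)%N = (i %% 4 == 3)%N by lia.
by case: ifP => // i_mod4; congr p`_ _; lia.
Qed.

End CoefComp.

Lemma pchar_F2 : (2 \in [pchar F2])%N.
Proof. exact: pchar_Fp. Qed.

Lemma pchar_polyF2 : (2 \in [pchar {poly F2}])%N.
Proof. by rewrite pchar_poly pchar_F2. Qed.

Lemma F2_addr_eq0 (x y : F2) : (x + y == 0) = (x == y).
Proof. by rewrite addr_eq0 oppr_pchar2 // pchar_F2. Qed.

Lemma F2_sqr (c : F2) : c ^+ 2 = c.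
Proof. by case: c => -[|[|//]] ?; apply/val_inj. Qed.

Lemma F2_sqr_poly (p : {poly F2}) : p ^+ 2 = p \Po 'X^2.
Proof.
rewrite comp_polyE -{1}[p]coefK poly_def -(pFrobenius_autE pchar_polyF2) rmorph_sum.
by apply: eq_bigr => i _; rewrite /= pFrobenius_autE exprZn F2_sqr exprAC.
Qed.

Lemma F2_exp4_poly (p : {poly F2}) : p ^+ 4 = p \Po 'X^4.
Proof.
by rewrite (exprM p 2 2) F2_sqr_poly [p ^+ 2]F2_sqr_poly -comp_polyA comp_Xn_poly -exprM.
Qed.

Lemma s2_wide n M : (n < M)%N -> s2 n = (\sum_(i < M) n %/ 2 ^ i %% 2)%N.
Proof.
move=> lt_nM; rewrite /s2 -(subnKC lt_nM) big_split_ord /= [X in (_ + X)%N]big1 ?addn0 //.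
move=> i _; rewrite divn_small // (leq_trans (ltn_expl n (ltnSn 1))) //.
by rewrite leq_exp2l //; lia.
Qed.

Lemma s2_half n : s2 n = (odd n + s2 n./2)%N.
Proof.
rewrite (@s2_wide n n.+2) // (@s2_wide n./2 n.+1); last lia.
rewrite big_ord_recl expn0 divn1 modn2; congr (_ + _)%N.
by apply: eq_bigr => i _; rewrite expnS divnMA divn2.
Qed.

Lemma natrF2_mod2 m : ((m %% 2)%:R : F2) = m%:R.
Proof. by rewrite {2}(divn_eq m 2) natrD natrM pchar_Fp_0 // mulr0 add0r. Qed.

Lemma tm_half n : tm n = tm n./2 + (odd n)%:R.
Proof. by rewrite /tm !natrF2_mod2 s2_half natrD addrC. Qed.

Lemma Fser_tm n : Fser n = tm n.
Proof. by case: n => //; rewrite /tm /s2 big_ord1. Qed.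

Definition trunc N (a : series) : {poly F2} := \poly_(i < N) a i.
Definition approx N (p : {poly F2}) (a : series) := forall i, (i < N)%N -> p`_i = a i.

Section Approx.
Variable N : nat.
Implicit Types (p q : {poly F2}) (a b f g : series).

Lemma approx_trunc a : approx N (trunc N a) a.
Proof. by move=> i lt_iN; rewrite coef_poly lt_iN. Qed.

Lemma approx_sp p : approx N p (sp p).
Proof. by []. Qed.

Lemma approx_add p q a b : approx N p a -> approx N q b -> approx N (p + q) (sadd a b).
Proof. by move=> pa qb i lt_iN; rewrite coefD pa ?qb. Qed.

Lemma approx_mul p q a b : approx N p a -> approx N q b -> approx N (p * q) (smul a b).
Proof.
move=> pa qb i lt_iN; rewrite coefM; apply: eq_bigr => j _.
by have lt_ji := ltn_ord j; rewrite pa ?qb //; lia.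
Qed.

Lemma approx_exp p a k : approx N p a -> approx N (p ^+ k) (spow a k).
Proof.
move=> pa; elim: k => [|k IHk] /=; first by move=> i _; rewrite expr0 coef1.
by rewrite exprS; apply: approx_mul.
Qed.

(* Both sums reduce to the terms k <= i: beyond size p the coefficients of p
   vanish, and beyond i the powers q ^+ k have no coefficient of degree i. *)
Lemma approx_comp p q f g : approx N p f -> approx N q g -> g 0%N = 0 ->
  approx N (p \Po q) (scomp f g).
Proof.
move=> pf qg g0 i lt_iN; have q0 : q`_0 = 0 by rewrite qg //; lia.
pose F k := p`_k * (q ^+ k)`_i.
rewrite coef_comp_poly -(@sum_ord_vanish _ F _ (size p + i.+1)) ?leq_addr //; last first.
  by move=> k /(nth_default 0) pk0; rewrite /F pk0 mul0r.
rewrite (@sum_ord_vanish _ F i.+1) ?leq_addl //; last first.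
  by move=> k lt_ik; rewrite /F coef_exp_coef0 ?mulr0.
apply: eq_bigr => k _; have lt_ki := ltn_ord k.
by rewrite /F (approx_exp k qg lt_iN) pf //; lia.
Qed.

Lemma approx_dvdXn p q a : approx N p a -> approx N q a -> 'X^N %| p - q.
Proof. by move=> pa qa; apply/dvdXnP => i lt_iN; rewrite coefB pa ?qa ?subrr. Qed.

Lemma approx_eq0 p a : approx N p a -> 'X^N %| p -> forall i, (i < N)%N -> a i = 0.
Proof. by move=> pa /dvdXnP p0 i lt_iN; rewrite -pa ?p0. Qed.

End Approx.

Lemma thue_morse_root N t : approx N t Fser ->
  'X^N %| (1 + 'X) ^+ 3 * t ^+ 2 + (1 + 'X) ^+ 2 * t + 'X.
Proof.
move=> tF; set D := t + (1 + 'X) * (t \Po 'X^2).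
have coefD_odd i : (i < N)%N -> D`_i = (odd i)%:R.
  move=> lt_iN; rewrite coefD coef_1DX_comp_X2 !tF; try lia.
  by rewrite !Fser_tm tm_half addrAC addrr_pchar2 ?pchar_F2 ?add0r.
have sqr_1DX : (1 + 'X) ^+ 2 = 1 + 'X^2 :> {poly F2}.
  by rewrite F2_sqr_poly rmorphD rmorph1 /= comp_polyX.
have -> : (1 + 'X) ^+ 3 * t ^+ 2 + (1 + 'X) ^+ 2 * t + 'X = (1 + 'X^2) * D + 'X.
  by rewrite [t ^+ 2]F2_sqr_poly /D -sqr_1DX; ring.
apply/dvdXnP => i lt_iN; rewrite mulrDl mul1r coefD (coefD D) coefXnM coefX.
case: i lt_iN => [|[|i]] lt_iN /=; rewrite ?coefD_odd ?addr0 //; try lia.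
  by rewrite addrr_pchar2 ?pchar_F2.
by rewrite !subSS subn0 /= negbK addrr_pchar2 ?pchar_F2.
Qed.

Definition cubic (g : {poly F2}) :=
  'X^2 * g ^+ 3 + 'X * (1 + 'X) * g ^+ 2 + (('X^2 + 1) * g + 'X * ('X + 1)).
Definition quartic (g : {poly F2}) :=
  'X^3 * g ^+ 4 + (1 + 'X) * g + 'X * ('X^2 + 1).

Lemma quarticE g : quartic g = ('X * g + 'X + 1) * cubic g.
Proof.
set w := ('X^3 + 'X^2) * g ^+ 3 + ('X^3 + 'X^2 + 'X) * g ^+ 2 + ('X^3 + 'X^2) * g + 'X^2.
have -> : quartic g = ('X * g + 'X + 1) * cubic g - (w + w).
  by rewrite /quartic /cubic /w; ring.
by rewrite addrr_pchar2 ?pchar_polyF2 ?subr0.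
Qed.

Section CompositionalInverse.
Variable G : series.
Hypotheses (G0 : G 0%N = 0) (FG : scomp Fser G = sX).

Lemma dvdXn_cubic N : 'X^N %| cubic (trunc N G).
Proof.
set g := trunc N G; set t := trunc N Fser.
have g0 : g`_0 = 0 by rewrite coef_poly; case: ifP.
have tg : 'X^N %| t \Po g - 'X.
  apply: (@approx_dvdXn _ _ _ (scomp Fser G)).
    by apply: approx_comp => //; apply: approx_trunc.
  by rewrite FG => i _; rewrite coefX.
have := dvdXn_comp (thue_morse_root (@approx_trunc N Fser)) g0.
rewrite !(rmorphD, rmorphM, rmorphXn, rmorph1) /= comp_polyX.
set u := t \Po g in tg *; move=> Pg.
(* Replacing u by its residue 'X changes the cubic in u by a multiple of u - 'X. *)
set w := 'X^2 * g + 'X^2 * g ^+ 2 + 'X * g.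
have -> : cubic g = (1 + g) ^+ 3 * u ^+ 2 + (1 + g) ^+ 2 * u + g
    - (u - 'X) * ((1 + g) ^+ 3 * (u + 'X) + (1 + g) ^+ 2) - (w + w).
  by rewrite /cubic /w; ring.
by rewrite addrr_pchar2 ?pchar_polyF2 // subr0 dvdp_sub // dvdp_mulr.
Qed.

Lemma dvdXn_quartic N : 'X^N %| quartic (trunc N G).
Proof. by rewrite quarticE dvdp_mull // dvdXn_cubic. Qed.

Ltac approx_poly :=
  repeat first [ apply: approx_trunc | apply: approx_sp | apply: approx_exp
               | apply: approx_add | apply: approx_mul ].

Lemma cubic_series :
  sadd (sadd (smul (sp ('X ^+ 2)) (spow G 3)) (smul (sp ('X * (1 + 'X))) (spow G 2)))
       (sadd (smul (sp ('X ^+ 2 + 1)) G) (sp ('X * ('X + 1)))) = szero.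
Proof.
apply: functional_extensionality => n.
by apply: (approx_eq0 _ (dvdXn_cubic n.+1) (ltnSn n)); rewrite /cubic; approx_poly.
Qed.

Lemma quartic_series :
  sadd (sadd (smul (sp ('X ^+ 3)) (spow G 4)) (smul (sp (1 + 'X)) G))
       (sp ('X * ('X ^+ 2 + 1))) = szero.
Proof.
apply: functional_extensionality => n.
by apply: (approx_eq0 _ (dvdXn_quartic n.+1) (ltnSn n)); rewrite /quartic; approx_poly.
Qed.

Lemma invG_step i :
  G i.+1 = G i + (if (i.+1 %% 4 == 3)%N then G (i.+1 %/ 4)%N else 0)
           + (i == 0)%:R + (i == 2)%:R.
Proof.
have := dvdXnP _ _ (dvdXn_quartic i.+2) i.+1 (ltnSn _).
rewrite /quartic F2_exp4_poly mulrDr mulr1 -exprS mulrDl mul1r !coefD coef_X3_comp_X4.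
rewrite coefXM coefXn coefX /= !(@approx_trunc i.+2 G) //; try lia.
rewrite !eqSS => H; apply/eqP; rewrite -F2_addr_eq0; apply/eqP.
by rewrite -[X in _ = X]H; set A := (if _ then _ else _); ring.
Qed.

Lemma invG_flat i : (i.+1 %% 4 != 3)%N -> i != 0%N -> i != 2%N -> G i.+1 = G i.
Proof. by move=> /negbTE m4 /negbTE i0 /negbTE i2; rewrite invG_step m4 i0 i2 !addr0. Qed.

Lemma invG_jump i : (i.+1 %% 4 == 3)%N -> i != 2%N -> G i.+1 = G i + G (i.+1 %/ 4)%N.
Proof.
move=> m4 /negbTE i2; rewrite invG_step m4 i2 addr0 (_ : i == 0 = false) ?addr0 //.
by apply: contraTF m4 => /eqP->.
Qed.

Lemma invG_block n : (1 <= n)%N ->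
  [/\ G (4 * n)%N = G (4 * n - 1)%N, G (4 * n + 1)%N = G (4 * n - 1)%N,
      G (4 * n + 2)%N = G (4 * n - 1)%N & G (4 * n + 3)%N = G (4 * n - 1)%N + G n].
Proof.
move=> n_gt0.
have e0 : G (4 * n)%N = G (4 * n - 1)%N.
  by rewrite [in LHS](_ : 4 * n = (4 * n - 1).+1)%N ?invG_flat; [|lia..].
have e1 : G (4 * n + 1)%N = G (4 * n)%N by rewrite addn1 invG_flat; [|lia..].
have e2 : G (4 * n + 2)%N = G (4 * n + 1)%N.
  by rewrite [in LHS](_ : 4 * n + 2 = (4 * n + 1).+1)%N ?invG_flat; [|lia..].
have e3 : G (4 * n + 3)%N = G (4 * n + 2)%N + G n.
  rewrite [in LHS](_ : 4 * n + 3 = (4 * n + 2).+1)%N; last lia.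
  by rewrite invG_jump; [congr (_ + G _) | lia..]; lia.
by rewrite e3 e2 e1 e0.
Qed.

End CompositionalInverse.

Theorem mainTheorem1 (G : series) :
  G 0%N = 0 ->
  scomp Fser G = sX ->
  scomp G Fser = sX ->
  (* X^2 G^3 + X(1+X) G^2 + (X^2+1) G + X(X+1) = 0 *)
  sadd (sadd (smul (sp ('X ^+ 2)) (spow G 3))
             (smul (sp ('X * (1 + 'X))) (spow G 2)))
       (sadd (smul (sp ('X ^+ 2 + 1)) G) (sp ('X * ('X + 1)))) = szero /\
  (* X^3 G^4 + (1+X) G + X(X^2+1) = 0 *)
  sadd (sadd (smul (sp ('X ^+ 3)) (spow G 4)) (smul (sp (1 + 'X)) G))
       (sp ('X * ('X ^+ 2 + 1))) = szero /\
  G 0%N = 0 /\ G 1%N = 1 /\ G 2%N = 1 /\ G 3%N = 0 /\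
  (forall n : nat, (1 <= n)%N ->
     [/\ G (4 * n)%N = G (4 * n - 1)%N,
         G (4 * n + 1)%N = G (4 * n - 1)%N,
         G (4 * n + 2)%N = G (4 * n - 1)%N &
         G (4 * n + 3)%N = G (4 * n - 1)%N + G n]).
Proof.
(* The left-inverse equation alone determines G. *)
move=> G0 FG _.
have step := invG_step G0 FG.
have G1 : G 1%N = 1 by rewrite step G0 /= !add0r addr0.
have G2 : G 2%N = 1 by rewrite step G1 /= !addr0.
have G3 : G 3%N = 0.
  by rewrite step /= G2 divn_small // G0 !addr0 addrr_pchar2 ?pchar_F2.
split; first exact: cubic_series.
split; first exact: quartic_series.
by do 4 (split => //); apply: invG_block.
Qed.
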